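(* Let $I\in[0,1)$, let $Z\ge 0$ and $L\ge 1$ be integers, and define $$P_s^{(TR)}(L)=1-\sum_{k=0}^{Z+1}\binom{k+Z}{k}I^k(1-I)^{Z+1}\Big[1-Q(L,Z+1-k,0)\Big],$$ $$P_s^{(TU)}=1-\sum_{k=0}^{Z+1}\binom{k+Z}{k}I^k(1-I)^{Z+1}\Big[1-P(Z+1-k)\Big].$$ Then: (i) if $0<I<1$, $P_s^{(TR)}(L)$ is strictly increasing in $L$; (ii) for every $L\ge1$, $P_s^{(TR)}(L)\le P_s^{(TU)}$, and the inequality is strict when $0<I<1$; (iii) $P_s^{(TR)}(L)<1$ for every $L\ge1$ whenever $0\le I<1$ (in particular also when $0.5\le I<1$, where $P_s^{(TU)}=1$).
   Context: Fix $I\in[0,1)$ (the probability that the next mined block is produced by the attacker). Let $\delta_1,\delta_2,\dots$ be i.i.d. random vectors in $\mathbb{Z}^2$ with $\delta_t=[-1,0]^T$ with probability $I$ and $\delta_t=[1,1]^T$ with probability $1-I$; for a starting point $[m,n]^T$ let $s_T=[m,n]^T+\sum_{t=1}^T\delta_t$. With $\mathcal{L}_1=\{[m',n']^T: m'=-1\}$ and $\mathcal{L}_2=\{[m',n']^T: n'=l\}$, let $$Q(l,m,n)=\sum_{T=0}^{\infty}\Pr\big(s_T\in\mathcal{L}_1,\ s_{T'}\notin\mathcal{L}_1\cup\mathcal{L}_2\ \forall\, T'<T\big)$$ be the probability that the walk hits $\mathcal{L}_1$ before $\mathcal{L}_2$. Let $P(m)=\left(\frac{I}{1-I}\right)^{m+1}$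 if $0\le I<0.5$ and $P(m)=1$ if $0.5\le I\le1$. $P_s^{(TR)}(L)$ is the success probability of a time-restricted double-spending attack (confirmation depth $Z$, attacker gives up once the honest branch has grown $L$ blocks past confirmation), and $P_s^{(TU)}$ that of the time-unrestricted attack. *)

From HB Require Import structures.
From mathcomp Require Import all_boot all_order all_algebra.
From mathcomp Require Import all_classical all_reals all_analysis.
Set Implicit Arguments. Unset Strict Implicit. Unset Printing Implicit Defensive.
Import Order.TTheory GRing.Theory Num.Theory.
Local Open Scope ring_scope.

(* A step: true = attacker block, delta = [-1,0]; false = honest, delta = [1,1]. *)
Definition delta (b : bool) : int * int := if b then (-1, 0) else (1, 1).

Definition pos (m n : int) (w : seq bool) : int * int :=
  foldl (fun p b => (p.1 + (delta b).1, p.2 + (delta b).2)) (m, n) w.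

Definition inL1 (p : int * int) : bool := p.1 == -1.
Definition inL2 (l : int) (p : int * int) : bool := p.2 == l.

Definition path_weight (R : realType) (I : R) (w : seq bool) : R :=
  \prod_(b <- w) (if b then I else 1 - I).

Definition first_hit_L1 (l m n : int) (T : nat) (w : T.-tuple bool) : bool :=
  inL1 (pos m n w) &&
  [forall t : 'I_T, ~~ (inL1 (pos m n (take t w)) || inL2 l (pos m n (take t w)))].

Definition hit_prob (R : realType) (I : R) (l m n : int) (T : nat) : R :=
  \sum_(w : T.-tuple bool) path_weight I w * (first_hit_L1 l m n w)%:R.

Definition Q (R : realType) (I : R) (l m n : int) : R :=
  \big[+%R/0]_(0 <= T <oo) hit_prob I l m n T.

Definition Pfun (R : realType) (I : R) (m : nat) : R :=
  if I < 1 / 2 then (I / (1 - I)) ^+ m.+1 else 1.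

Definition Ps_TR (R : realType) (I : R) (Z : nat) (L : int) : R :=
  1 - \sum_(k < Z.+2) ('C(k + Z, k))%:R * I ^+ k * (1 - I) ^+ Z.+1
        * (1 - Q I L (Z.+1 - k)%N 0).

Definition Ps_TU (R : realType) (I : R) (Z : nat) : R :=
  1 - \sum_(k < Z.+2) ('C(k + Z, k))%:R * I ^+ k * (1 - I) ^+ Z.+1
        * (1 - Pfun I (Z.+1 - k)%N).

From Pilot Require Import Defs.
From HB Require Import structures.
From mathcomp Require Import all_boot all_order all_algebra.
From mathcomp Require Import all_classical all_reals all_analysis.
From mathcomp Require Import zify ring lra.
Set Implicit Arguments. Unset Strict Implicit. Unset Printing Implicit Defensive.
Import Order.TTheory GRing.Theory Num.Theory.
Local Open Scope ring_scope.

(* Started from [m >= -1, n <= l], the quantity [2 (l - n) + m] drops by one at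
   every step, so the walk is absorbed by L1 or L2 within finitely many steps and
   Q is the value of a finite first-step recursion [hit_within].  The claims then
   follow from comparisons proved by induction on that recursion: raising the
   barrier L2 can only help the attacker, and strictly so because the all-attacker
   continuation from the old barrier now counts; [I r^k + (1 - I) r^(k+2) = r^(k+1)]
   for [r = I / (1 - I)] makes [r^(m+1)] a supersolution, and so is 1; and from
   [m >= 0] the honest first step keeps the probability below 1. *)

Definition stopped (l : int) (p : int * int) : bool := inL1 p || inL2 l p.

Lemma inL1_ge0 (m n : int) : 0 <= m -> inL1 (m, n) = false.
Proof. by rewrite /inL1 /= => hm; apply/negbTE/eqP; lia. Qed.

Definition first_hit (l m n : int) (w : seq bool) : bool :=
  inL1 (pos m n w) &&
  all (fun t => ~~ stopped l (pos m n (take t w))) (iota 0 (size w)).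

Lemma first_hit_L1E l m n T (w : T.-tuple bool) :
  first_hit_L1 l m n w = first_hit l m n w.
Proof.
rewrite /first_hit_L1 /first_hit size_tuple; congr (_ && _).
apply/forallP/allP => [H t | H t].
- by rewrite mem_iota add0n => /andP[_ ht]; exact: (H (Ordinal ht)).
- by apply: H; rewrite mem_iota add0n ltn_ord.
Qed.

Lemma first_hit_cons l m n b w : first_hit l m n (b :: w) =
  ~~ stopped l (m, n) && first_hit l (m + (delta b).1) (n + (delta b).2) w.
Proof.
by rewrite /first_hit /= -(addn0 1%N) iotaDl all_map andbCA.
Qed.

Lemma big_tuple_cons (R : nmodType) (X : finType) T (F : seq X -> R) :
  \sum_(w : T.+1.-tuple X) F w = \sum_(x : X) \sum_(w : T.-tuple X) F (x :: w).
Proof.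
rewrite pair_big /=.
rewrite (reindex (fun p : X * T.-tuple X => [tuple of p.1 :: p.2])) //=.
exists (fun w : T.+1.-tuple X => (thead w, [tuple of behead w])).
  by move=> [b w] _ /=; congr pair; apply: val_inj.
by move=> w _; rewrite [RHS]tuple_eta; apply: val_inj.
Qed.

Section HittingProbability.
Variables (R : realType) (I : R).

Lemma hit_prob0 l m n : hit_prob I l m n 0 = (inL1 (m, n))%:R.
Proof.
rewrite /hit_prob (big_pred1 [tuple]); last first.
  by move=> w; apply/esym/eqP/val_inj; case: w => [[]].
by rewrite first_hit_L1E /first_hit /path_weight /= big_nil mul1r andbT.
Qed.

Lemma hit_probS l m n T : hit_prob I l m n T.+1 =
  if stopped l (m, n) then 0 else
  I * hit_prob I l (m - 1) n T + (1 - I) * hit_prob I l (m + 1) (n + 1) T.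
Proof.
rewrite /hit_prob.
under eq_bigr => w _ do rewrite first_hit_L1E.
rewrite (@big_tuple_cons _ _ _ (fun w => path_weight I w * (first_hit l m n w)%:R)).
rewrite big_bool /=.
case: ifP => hstop.
  by rewrite !big1 ?addr0 // => w _; rewrite first_hit_cons hstop mulr0.
rewrite !mulr_sumr; congr (_ + _); apply: eq_bigr => w _;
  by rewrite first_hit_L1E first_hit_cons hstop /path_weight big_cons mulrA ?addr0.
Qed.

Fixpoint hit_within (l : int) (N : nat) (m n : int) : R :=
  if N is N.+1 then
    if inL1 (m, n) then 1 else if inL2 l (m, n) then 0 else
    I * hit_within l N (m - 1) n + (1 - I) * hit_within l N (m + 1) (n + 1)
  else 0.

Lemma sum_hit_prob l N m n : \sum_(T < N) hit_prob I l m n T = hit_within l N m n.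
Proof.
elim: N m n => [|N IH] m n; first by rewrite big_ord0.
rewrite big_ord_recl hit_prob0 /=.
under eq_bigr => T _ do rewrite hit_probS.
rewrite /stopped; case: (inL1 _); first by rewrite big1 ?addr0.
case: (inL2 _ _); first by rewrite big1 ?addr0.
by rewrite add0r big_split /= -!mulr_sumr !IH.
Qed.

Lemma hit_within_stable (l : int) N M (m n : int) : -1 <= m -> n <= l ->
  2 * (l - n) + m + 2 <= N%:Z -> (N <= M)%N ->
  hit_within l M m n = hit_within l N m n.
Proof.
elim: N M m n => [|N IH] [|M] m n hm hn hN hNM //=; try lia.
rewrite /inL1 /inL2 /=; case: eqP => [//|hm1]; case: eqP => [//|hnl].
by rewrite (IH M (m - 1) n) 1?(IH M (m + 1) (n + 1)) //; lia.
Qed.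

Lemma Q_hit_within (l : int) N (m n : int) : -1 <= m -> n <= l ->
  2 * (l - n) + m + 2 <= N%:Z -> Q I l m n = hit_within l N m n.
Proof.
move=> hm hn hN; apply: norm_lim_near_cst; near=> M.
rewrite big_mkord sum_hit_prob (@hit_within_stable l N M m n hm hn hN) //.
by near: M; exists N.
Unshelve. all: by end_near.
Qed.

Hypotheses (I_ge0 : 0 <= I) (I_lt1 : I < 1).

Let J_gt0 : 0 < 1 - I. Proof. by rewrite subr_gt0. Qed.
Let J_ge0 : 0 <= 1 - I. Proof. exact: ltW. Qed.

Lemma hit_within_ge0 l N m n : 0 <= hit_within l N m n.
Proof.
elim: N m n => [|N IH] m n //=; do 2 case: ifP => // _.
by rewrite addr_ge0 // mulr_ge0.
Qed.

Lemma hit_within_le1 l N m n : hit_within l N m n <= 1.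
Proof.
elim: N m n => [|N IH] m n //=; do 2 case: ifP => // _.
have := IH (m - 1) n; have := IH (m + 1) (n + 1); have := I_ge0; have := I_lt1; nra.
Qed.

Lemma hit_within_lt1 l N (m : int) n : 0 <= m -> hit_within l N m n < 1.
Proof.
elim: N m n => [|N IH] m n hm //=.
rewrite inL1_ge0 //; case: ifP => // _.
have := hit_within_le1 l N (m - 1) n; have := IH (m + 1) (n + 1) ltac:(lia).
have := I_ge0; have := I_lt1; nra.
Qed.

Section Geometric.
Let r := I / (1 - I).

Let r_ge0 : 0 <= r. Proof. exact: divr_ge0. Qed.

Let r_step k : I * r ^+ k + (1 - I) * r ^+ k.+2 = r ^+ k.+1.
Proof. by rewrite !exprS /r; field; rewrite lt0r_neq0. Qed.

Lemma hit_within_le_geom l N (m : nat) n : hit_within l N (m%:Z - 1) n <= r ^+ m.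
Proof.
elim: N m n => [|N IH] [|m] n /=.
- by rewrite expr0.
- exact: exprn_ge0 r_ge0.
- by [].
case: ifP => _; first exact: exprn_ge0 r_ge0.
have -> : m.+1%:Z - 1 - 1 = m%:Z - 1 by lia.
have -> : m.+1%:Z - 1 + 1 = m.+2%:Z - 1 by lia.
by rewrite -r_step lerD // ler_wpM2l.
Qed.

Lemma hit_within_lt_geom l N (m : nat) n : 0 < I -> (0 < m)%N ->
  hit_within l N (m%:Z - 1) n < r ^+ m.
Proof.
move=> I_gt0; have r_gt0 : 0 < r by exact: divr_gt0.
elim: N m n => [|N IH] [|m] n //= _; first exact: exprn_gt0.
case: ifP => _; first exact: exprn_gt0.
have -> : m.+1%:Z - 1 - 1 = m%:Z - 1 by lia.
have -> : m.+1%:Z - 1 + 1 = m.+2%:Z - 1 by lia.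
by rewrite -r_step ler_ltD ?ler_wpM2l ?ltr_pM2l ?IH ?hit_within_le_geom.
Qed.

End Geometric.

Lemma hit_within_le_Pfun l N (m : nat) : hit_within l N m 0 <= Defs.Pfun I m.
Proof.
rewrite /Defs.Pfun; case: ifP => _; last exact: hit_within_le1.
by rewrite (_ : m%:Z = m.+1%:Z - 1); [exact: hit_within_le_geom | lia].
Qed.

Lemma hit_within_lt_Pfun l N (m : nat) : 0 < I -> hit_within l N m 0 < Defs.Pfun I m.
Proof.
move=> I_gt0; rewrite /Defs.Pfun; case: ifP => _; last exact: hit_within_lt1.
by rewrite (_ : m%:Z = m.+1%:Z - 1); [exact: hit_within_lt_geom | lia].
Qed.

(* The all-attacker path from [(m - 1, n)] reaches L1 after [m] steps. *)
Lemma hit_within_ge_expr l N (m : nat) n : (m < N)%N -> n != l ->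
  I ^+ m <= hit_within l N (m%:Z - 1) n.
Proof.
move=> + hnl; elim: N m => [|N IH] [|m] hmN //=.
rewrite /inL2 /= (negbTE hnl).
have -> : m.+1%:Z - 1 - 1 = m%:Z - 1 by lia.
by rewrite exprS -[leLHS]addr0 lerD ?ler_wpM2l ?IH ?mulr_ge0 ?hit_within_ge0.
Qed.

Lemma hit_within_mono (l : int) N m (n : int) : n <= l ->
  hit_within l N m n <= hit_within (l + 1) N m n.
Proof.
elim: N m n => [|N IH] m n hn //=; case: ifP => // _.
rewrite /inL2 /= (_ : (n == l + 1) = false); last by apply/negbTE/eqP; lia.
case: ifP => [_|/negbT/eqP hnl]; first by rewrite addr_ge0 ?mulr_ge0 ?hit_within_ge0.
by rewrite lerD // ler_wpM2l // IH //; lia.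
Qed.

Lemma hit_within_mono_lt (l : int) N (m n : int) : 0 < I -> 0 <= m -> n <= l ->
  2 * (l - n) + m + 2 <= N%:Z -> hit_within l N m n < hit_within (l + 1) N m n.
Proof.
move=> I_gt0; elim: N m n => [|N IH] m n hm hn hN /=; first lia.
rewrite inL1_ge0 //.
rewrite /inL2 /= (_ : (n == l + 1) = false); last by apply/negbTE/eqP; lia.
case: eqP => [enl|/eqP hnl].
  case: m hm hN => [k|//] _ hN.
  rewrite ltr_pwDl ?mulr_ge0 ?hit_within_ge0 // mulr_gt0 //.
  apply: (lt_le_trans (exprn_gt0 k I_gt0)).
  by apply: hit_within_ge_expr; [lia | apply/eqP; lia].
rewrite ler_ltD ?ler_wpM2l ?hit_within_mono ?ltr_pM2l ?IH //; lia.
Qed.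

End HittingProbability.

Section Weighted.
Variable (R : realFieldType).

Lemma sum_weighted_defect_le n (c x y : 'I_n -> R) :
  (forall k, 0 <= c k) -> (forall k, x k <= y k) ->
  \sum_k c k * (1 - y k) <= \sum_k c k * (1 - x k).
Proof.
by move=> c_ge0 xy; apply: ler_sum => k _; rewrite ler_wpM2l ?lerD2l ?lerN2.
Qed.

Lemma sum_weighted_defect_lt n (c x y : 'I_n.+1 -> R) :
  (forall k, 0 <= c k) -> (forall k, x k <= y k) ->
  0 < c ord0 -> x ord0 < y ord0 ->
  \sum_k c k * (1 - y k) < \sum_k c k * (1 - x k).
Proof.
move=> c_ge0 xy c0 xy0; rewrite !big_ord_recl ltr_leD ?sum_weighted_defect_le //.
by rewrite ltr_pM2l // ltrD2l ltrN2.
Qed.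

End Weighted.

Definition attack_coef (R : numDomainType) (I : R) (Z : nat) (k : 'I_Z.+2) : R :=
  'C(k + Z, k)%:R * I ^+ k * (1 - I) ^+ Z.+1.
Arguments attack_coef {R} I Z k.

Lemma attack_coef_ge0 (R : numDomainType) (I : R) Z k :
  0 <= I -> I <= 1 -> 0 <= attack_coef I Z k.
Proof. by move=> I_ge0 I_le1; rewrite !mulr_ge0 ?exprn_ge0 // subr_ge0. Qed.

Lemma attack_coef0_gt0 (R : numDomainType) (I : R) Z :
  I < 1 -> 0 < attack_coef I Z ord0.
Proof. by move=> I_lt1; rewrite /attack_coef bin0 mul1r expr0 mul1r exprn_gt0 // subr_gt0. Qed.

Lemma Ps_TR_hit_within (R : realType) (I : R) Z (L : int) N :
  0 <= L -> 2 * L + Z.+3%:Z <= N%:Z -> Ps_TR I Z L =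
  1 - \sum_k attack_coef I Z k * (1 - hit_within I L N (Z.+1 - k)%N 0).
Proof.
move=> L_ge0 hN; congr (_ - _); apply: eq_bigr => k _; congr (_ * (1 - _)).
by apply: Q_hit_within; have := ltn_ord k; lia.
Qed.

Theorem corollary1 (R : realType) (I : R) (Z : nat) :
  0 <= I -> I < 1 ->
  [/\ (0 < I -> forall L : int, 1 <= L -> Ps_TR I Z L < Ps_TR I Z (L + 1)),
      (forall L : int, 1 <= L -> Ps_TR I Z L <= Ps_TU I Z),
      (0 < I -> forall L : int, 1 <= L -> Ps_TR I Z L < Ps_TU I Z) &
      (forall L : int, 1 <= L -> Ps_TR I Z L < 1)].
Proof.
move=> I_ge0 I_lt1; set c := attack_coef I Z.
have c_ge0 k : 0 <= c k by rewrite attack_coef_ge0 // ltW.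
have c0_gt0 : 0 < c ord0 by rewrite attack_coef0_gt0.
pose N (L : int) := (2 * `|L| + Z + 5)%N.
have PsE L : 1 <= L -> Ps_TR I Z L =
    1 - \sum_k c k * (1 - hit_within I L (N L) (Z.+1 - k)%N 0).
  by move=> hL; apply: Ps_TR_hit_within; rewrite /N; lia.
have PsTUE : Ps_TU I Z = 1 - \sum_k c k * (1 - Defs.Pfun I (Z.+1 - k)%N) by [].
split=> [I_gt0 L hL | L hL | I_gt0 L hL | L hL]; rewrite PsE //.
- rewrite (@Ps_TR_hit_within _ _ _ (L + 1) (N L)); try (rewrite /N; lia).
  rewrite ltrD2l ltrN2 sum_weighted_defect_lt // => [k|].
    by rewrite hit_within_mono //; lia.
  by rewrite subn0 hit_within_mono_lt //; rewrite /N; lia.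
- by rewrite PsTUE lerD2l lerN2 sum_weighted_defect_le // => k;
    rewrite hit_within_le_Pfun.
- by rewrite PsTUE ltrD2l ltrN2 sum_weighted_defect_lt // => [k|];
    rewrite ?hit_within_le_Pfun ?hit_within_lt_Pfun.
- set x := fun k : 'I_Z.+2 => hit_within I L (N L) (Z.+1 - k)%N 0.
  suff : \sum_k c k * (1 - 1) < \sum_k c k * (1 - x k).
    by rewrite big1 => [|k _]; rewrite ?subrr ?mulr0 //; lra.
  apply: sum_weighted_defect_lt => // [k|]; first exact: hit_within_le1.
  exact: hit_within_lt1.
Qed.
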